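(* Let $\{x^k\}$ be generated by the MPG algorithm described in the context, and let $k$ be an iteration at which the algorithm does not stop (so $x^{k+1}$, $d^k$, $t_k$ are defined). Suppose the index $j\in\{1,\ldots,m\}$ satisfies $$G_j(x^{k+1})\le G_j(x^k)+t_k\nabla G_j(x^k)^\top d^k+t_k\tfrac{\gamma}{2}\|d^k\|^2.$$ Then: (i) $\psi_{x^k}(p^k)\ge \frac{1}{t_k}\big(F_j(x^{k+1})-F_j(x^k)\big)-\frac{\gamma}{2}\|d^k\|^2$; (ii) for every $x\in\mathrm{dom}(F)$, $$\|x^{k+1}-x\|^2\le\|x^k-x\|^2+2\alpha\big(F_j(x^k)-F_j(x^{k+1})\big)+2\alpha t_k\max_{i=1,\ldots,m}\big(F_i(x)-F_i(x^k)\big)-2\alpha t_k\Big(\frac1\alpha-\frac\gamma2\Big)\|d^k\|^2+t_k^2\|d^k\|^2;$$ (iii) $F_j(x^{k+1})-F_j(x^k)\le -t_k\big(\frac1\alpha-\frac\gamma2\big)\|d^k\|^2$.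
   Context: Let $F:\mathbb{R}^n\to(\mathbb{R}\cup\{+\infty\})^m$, $F=(F_1,\ldots,F_m)$, with $F_j=G_j+H_j$ for $j=1,\ldots,m$, where: (i) each $G_j:\mathbb{R}^n\to\mathbb{R}$ is continuously differentiable and convex; (ii) each $H_j:\mathbb{R}^n\to\mathbb{R}\cup\{+\infty\}$ is proper, convex and continuous on its domain; (iii) $\mathrm{dom}(F):=\{x: F_j(x)<+\infty\ \forall j\}$ is nonempty and closed. For $u,v\in\mathbb{R}^m$, $u\preceq v$ means $u_j\le v_j$ for all $j$. For $x\in\mathrm{dom}(F)$ and $\alpha>0$ define $\psi_x(u):=\max_{j=1,\ldots,m}\big(\nabla G_j(x)^\top(u-x)+H_j(u)-H_j(x)\big)$, $p_\alpha(x):=\arg\min_{u\in\mathbb{R}^n}\psi_x(u)+\frac{1}{2\alpha}\|u-x\|^2$ (unique minimizer), and $\theta_\alpha(x):=\psi_x(p_\alpha(x))+\frac{1}{2\alpha}\|p_\alpha(x)-x\|^2$. MPG algorithm. Step 0: choose $x^0\in\mathrm{dom}(F)$, $\alpha>0$, $\gamma\in(0,2/\alpha)$, $0<\tau_1<\tau_2<1$; set $k=0$. Step 1: compute $p^k:=p_\alpha(x^k)$ and $\theta_\alpha(x^k)$. Step 2: if $\theta_\alpha(x^k)=0$, stop. Step 3: set $d^k:=p^k-x^k$, take $j_k^*\in\arg\max_{j}\nabla G_j(x^k)^\top d^k$, set $t=1$. Step 3.1: if $G_{j_k^*}(x^k+td^k)\le G_{j_k^*}(x^k)+t\nabla G_{j_k^*}(x^k)^\top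 d^k+t\frac{\gamma}{2}\|d^k\|^2$, go to Step 3.2; otherwise replace $t$ by some value in $[\tau_1 t,\tau_2 t]$ and repeat Step 3.1. Step 3.2: if $F(x^k+td^k)\preceq F(x^k)$, set $t_k=t$ and go to Step 4. Step 3.3: replace $t$ by some value in $[\tau_1 t,\tau_2 t]$; if $G_j(x^k+td^k)\le G_j(x^k)+t\nabla G_j(x^k)^\top d^k+t\frac{\gamma}{2}\|d^k\|^2$ for all $j=1,\ldots,m$, set $t_k=t$ and go to Step 4; otherwise repeat Step 3.3. Step 4: $x^{k+1}:=x^k+t_kd^k$, $k\leftarrow k+1$, go to Step 1. *)

From HB Require Import structures.
From mathcomp Require Import all_boot all_order all_algebra.
From mathcomp Require Import all_classical all_reals all_analysis.
Set Implicit Arguments. Unset Strict Implicit. Unset Printing Implicit Defensive.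
Import Order.TTheory GRing.Theory Num.Theory.
Import numFieldNormedType.Exports.
Local Open Scope classical_set_scope.
Local Open Scope ring_scope.

Definition dotv (R : realType) (n : nat) (u v : 'rV[R]_n) : R :=
  \sum_(i < n) u ord0 i * v ord0 i.
Definition sqnorm (R : realType) (n : nat) (v : 'rV[R]_n) : R := dotv v v.

Definition convex_fun (R : realType) (n : nat) (f : 'rV[R]_n -> R) : Prop :=
  forall (x y : 'rV[R]_n) (l : R), 0 < l < 1 ->
    f ((1 - l) *: x + l *: y) <= (1 - l) * f x + l * f y.

Definition convex_efun (R : realType) (n : nat) (f : 'rV[R]_n -> \bar R) : Prop :=
  forall (x y : 'rV[R]_n) (l : R), 0 < l < 1 ->
    (f (((1 - l) *: x + l *: y)%R) <= (1 - l)%:E * f x + l%:E * f y)%E.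

Definition proper_efun (R : realType) (n : nat) (f : 'rV[R]_n -> \bar R) : Prop :=
  (forall x, f x != -oo%E) /\ exists x, f x \is a fin_num.

Definition edom (R : realType) (n : nat) (f : 'rV[R]_n -> \bar R) : set 'rV[R]_n :=
  [set x | f x \is a fin_num].

Definition is_gradient (R : realType) (n : nat) (f : 'rV[R]_n -> R)
    (g : 'rV[R]_n -> 'rV[R]_n) : Prop :=
  forall x, differentiable f x /\ forall v, 'd f x v = dotv (g x) v.

Definition Fobj (R : realType) (n m : nat) (G : 'I_m -> 'rV[R]_n -> R)
    (H : 'I_m -> 'rV[R]_n -> \bar R) (j : 'I_m) (x : 'rV[R]_n) : \bar R :=
  ((G j x)%:E + H j x)%E.

Definition domF (R : realType) (n m : nat) (G : 'I_m -> 'rV[R]_n -> R)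
    (H : 'I_m -> 'rV[R]_n -> \bar R) : set 'rV[R]_n :=
  [set x | forall j, (Fobj G H j x < +oo)%E].

Definition standing_assumptions (R : realType) (n m : nat)
    (G : 'I_m -> 'rV[R]_n -> R) (gradG : 'I_m -> 'rV[R]_n -> 'rV[R]_n)
    (H : 'I_m -> 'rV[R]_n -> \bar R) : Prop :=
  (forall j, is_gradient (G j) (gradG j) /\ continuous (gradG j)
             /\ convex_fun (G j)) /\
  (forall j, proper_efun (H j) /\ convex_efun (H j) /\
             {within edom (H j), continuous (fun x => fine (H j x))}) /\
  (domF G H !=set0 /\ closed (domF G H)).

Definition psi (R : realType) (n m : nat)
    (gradG : 'I_m -> 'rV[R]_n -> 'rV[R]_n) (H : 'I_m -> 'rV[R]_n -> \bar R)
    (x u : 'rV[R]_n) : \bar R :=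
  (\big[maxe/-oo]_(j < m) ((dotv (gradG j x) (u - x)%R)%:E + H j u - H j x))%E.

Definition prox_obj (R : realType) (n m : nat)
    (gradG : 'I_m -> 'rV[R]_n -> 'rV[R]_n) (H : 'I_m -> 'rV[R]_n -> \bar R)
    (alpha : R) (x u : 'rV[R]_n) : \bar R :=
  (psi gradG H x u + (sqnorm (u - x)%R / (2 * alpha))%:E)%E.

Definition is_prox (R : realType) (n m : nat)
    (gradG : 'I_m -> 'rV[R]_n -> 'rV[R]_n) (H : 'I_m -> 'rV[R]_n -> \bar R)
    (alpha : R) (x p : 'rV[R]_n) : Prop :=
  forall u, (prox_obj gradG H alpha x p <= prox_obj gradG H alpha x u)%E.

(* theta_alpha(x) given p = p_alpha(x) *)
Definition theta (R : realType) (n m : nat)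
    (gradG : 'I_m -> 'rV[R]_n -> 'rV[R]_n) (H : 'I_m -> 'rV[R]_n -> \bar R)
    (alpha : R) (x p : 'rV[R]_n) : \bar R :=
  prox_obj gradG H alpha x p.

Definition armijo (R : realType) (n m : nat) (G : 'I_m -> 'rV[R]_n -> R)
    (gradG : 'I_m -> 'rV[R]_n -> 'rV[R]_n) (gamma : R) (x d : 'rV[R]_n)
    (j : 'I_m) (t : R) : Prop :=
  G j (x + t *: d) <= G j x + t * dotv (gradG j x) d + t * (gamma / 2) * sqnorm d.

Definition Fle (R : realType) (n m : nat) (G : 'I_m -> 'rV[R]_n -> R)
    (H : 'I_m -> 'rV[R]_n -> \bar R) (y x : 'rV[R]_n) : Prop :=
  forall j, (Fobj G H j y <= Fobj G H j x)%E.

Definition reduce (R : realType) (tau1 tau2 t t' : R) : Prop :=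
  tau1 * t <= t' <= tau2 * t.

(* Backtracking loop: starting from t, while the test P fails replace t by
   some value in [tau1 t, tau2 t]; bt_until P t s means the loop can exit
   with value s. *)
Inductive bt_until (R : realType) (tau1 tau2 : R) (P : R -> Prop) : R -> R -> Prop :=
| bt_stop t : P t -> bt_until tau1 tau2 P t t
| bt_next t t' s : ~ P t -> reduce tau1 tau2 t t' ->
    bt_until tau1 tau2 P t' s -> bt_until tau1 tau2 P t s.

Definition linesearch (R : realType) (n m : nat) (G : 'I_m -> 'rV[R]_n -> R)
    (gradG : 'I_m -> 'rV[R]_n -> 'rV[R]_n) (H : 'I_m -> 'rV[R]_n -> \bar R)
    (gamma tau1 tau2 : R) (x d : 'rV[R]_n) (jstar : 'I_m) (tk : R) : Prop :=
  exists t2 : R,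
    bt_until tau1 tau2 (armijo G gradG gamma x d jstar) 1 t2 /\
    ((Fle G H (x + t2 *: d) x /\ tk = t2) \/
     (~ Fle G H (x + t2 *: d) x /\
      exists t3, reduce tau1 tau2 t2 t3 /\
        bt_until tau1 tau2 (fun t => forall j, armijo G gradG gamma x d j t) t3 tk)).

(* (x, p, t) is a run of the MPG algorithm: x 0 in dom F; as long as the
   algorithm has not stopped before iteration k, p k = p_alpha(x k), and if
   moreover theta_alpha(x k) <> 0, then d^k = p k - x k, some j* maximizing
   <grad G_j(x k), d^k> is taken, t k is an output of the line search and
   x (k+1) = x k + t k d^k. *)
Definition MPG_run (R : realType) (n m : nat) (G : 'I_m -> 'rV[R]_n -> R)
    (gradG : 'I_m -> 'rV[R]_n -> 'rV[R]_n) (H : 'I_m -> 'rV[R]_n -> \bar R)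
    (alpha gamma tau1 tau2 : R)
    (x p : nat -> 'rV[R]_n) (t : nat -> R) : Prop :=
  domF G H (x 0%N) /\
  forall k : nat,
    (forall i : nat, (i < k)%N -> theta gradG H alpha (x i) (p i) != 0%E) ->
    is_prox gradG H alpha (x k) (p k) /\
    (theta gradG H alpha (x k) (p k) != 0%E ->
      exists jstar : 'I_m,
        (forall j, dotv (gradG j (x k)) (p k - x k)
                   <= dotv (gradG jstar (x k)) (p k - x k)) /\
        linesearch G gradG H gamma tau1 tau2 (x k) (p k - x k) jstar (t k) /\
        x k.+1 = x k + t k *: (p k - x k)).

From HB Require Import structures.
From mathcomp Require Import all_boot all_order all_algebra.
From mathcomp Require Import all_classical all_reals all_analysis.
From mathcomp Require Import ring lra.
Import Order.TTheory GRing.Theory Num.Theory.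
Import numFieldNormedType.Exports.
Local Open Scope classical_set_scope.
Local Open Scope ring_scope.

(* Everything rests on two inequalities for p = p_alpha(x). First, since the
   prox objective is minimal at p, comparing it with the points p + s (u - p)
   of a segment, using the convexity of the terms of psi_x and letting s go
   to 0, gives psi_x(p) <= psi_x(u) + <p - x, u - p> / alpha; with u = x this
   is psi_x(p) <= -||p - x||^2 / alpha. Second, the Armijo test for j and the
   convexity of H_j along [x, p] bound F_j(x + t d) - F_j(x) by
   t (psi_x(p) + gamma/2 ||d||^2). (i) and (iii) follow at once; for (ii)
   expand ||x + t d - y||^2, use the first inequality with u = y, and bound
   psi_x(y) by max_i (F_i(y) - F_i(x)) via the gradient inequality for the
   convex G_i. *)

Set Implicit Arguments. Unset Strict Implicit.

Section InnerProduct.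
Variables (R : realType) (n : nat).
Implicit Types (a : R) (u v w : 'rV[R]_n).

Lemma dotvC u v : dotv u v = dotv v u.
Proof. by apply: eq_bigr => i _; rewrite mulrC. Qed.

Lemma dotvDl u v w : dotv (u + v) w = dotv u w + dotv v w.
Proof. by rewrite /dotv -big_split; apply: eq_bigr => i _; rewrite !mxE mulrDl. Qed.

Lemma dotvDr u v w : dotv w (u + v) = dotv w u + dotv w v.
Proof. by rewrite dotvC dotvDl !(dotvC w). Qed.

Lemma dotvZl a u w : dotv (a *: u) w = a * dotv u w.
Proof. by rewrite /dotv mulr_sumr; apply: eq_bigr => i _; rewrite !mxE mulrA. Qed.

Lemma dotvZr a u w : dotv w (a *: u) = a * dotv w u.
Proof. by rewrite dotvC dotvZl dotvC. Qed.

Lemma dotvNr u w : dotv w (- u) = - dotv w u.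
Proof. by rewrite -scaleN1r dotvZr mulN1r. Qed.

Lemma dotvBr u v w : dotv w (u - v) = dotv w u - dotv w v.
Proof. by rewrite dotvDr dotvNr. Qed.

Lemma dotv0r u : dotv u 0 = 0.
Proof. by rewrite -(subrr u) dotvBr subrr. Qed.

Lemma sqnorm_ge0 u : 0 <= sqnorm u.
Proof. by rewrite sumr_ge0 // => i _; rewrite -expr2 sqr_ge0. Qed.

Lemma sqnormD u v : sqnorm (u + v) = sqnorm u + 2 * dotv u v + sqnorm v.
Proof. by rewrite /sqnorm !dotvDl !dotvDr (dotvC v u); ring. Qed.

Lemma sqnormZ a u : sqnorm (a *: u) = a ^+ 2 * sqnorm u.
Proof. by rewrite /sqnorm dotvZl dotvZr mulrA -expr2. Qed.

End InnerProduct.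

Lemma ler_of_forall_small_ler_addM (R : realFieldType) (a b c : R) : 0 <= c ->
  (forall s, 0 < s < 1 -> a <= b + s * c) -> a <= b.
Proof.
move=> c_ge0 hs; apply/ler_addgt0Pr => e e_gt0.
have d_gt0 : 0 < e + c + 1 by lra.
pose s := e / (e + c + 1).
have s_gt0 : 0 < s by rewrite divr_gt0.
have s_lt1 : s < 1 by rewrite ltr_pdivrMr // mul1r; lra.
apply: le_trans (hs s _) _; first by rewrite s_gt0 s_lt1.
by rewrite lerD2l /s mulrAC ler_pdivrMr //; nra.
Qed.

Lemma comb_segmentE (R : pzRingType) (V : lmodType R) (a b : V) (l : R) :
  (1 - l) *: a + l *: b = a + l *: (b - a).
Proof. by rewrite scalerBl scale1r scalerBr addrA addrAC. Qed.

Section Convexity.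
Variables (R : realType) (n : nat).
Implicit Types (a b : 'rV[R]_n) (l : R).

Lemma convex_fun_segment (f : 'rV[R]_n -> R) a b l :
  convex_fun f -> 0 < l <= 1 -> f (a + l *: (b - a)) <= f a + l * (f b - f a).
Proof.
move=> f_cvx /andP[l_gt0]; rewrite le_eqVlt => /predU1P[->|l_lt1].
  by rewrite scale1r addrC subrK; lra.
by have := f_cvx a b l; rewrite l_gt0 l_lt1 comb_segmentE => /(_ isT); lra.
Qed.

Lemma convex_efun_segment (f : 'rV[R]_n -> \bar R) a b l :
  (forall z, f z != -oo%E) -> convex_efun f ->
  f a \is a fin_num -> f b \is a fin_num -> 0 < l <= 1 ->
  f (a + l *: (b - a)) \is a fin_num /\
  fine (f (a + l *: (b - a))) <= fine (f a) + l * (fine (f b) - fine (f a)).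
Proof.
move=> f_proper f_cvx fa fb /andP[l_gt0]; rewrite le_eqVlt => /predU1P[->|l_lt1].
  by rewrite scale1r addrC subrK; split=> //; lra.
have := f_cvx a b l; rewrite l_gt0 l_lt1 comb_segmentE => /(_ isT) hle.
rewrite -(fineK fa) -(fineK fb) -!EFinM -EFinD in hle.
have fab : f (a + l *: (b - a)) \is a fin_num.
  by move: hle (f_proper (a + l *: (b - a))); case: (f _).
by rewrite -(fineK fab) lee_fin in hle; split=> //; lra.
Qed.

Lemma convex_gradient_le (f : 'rV[R]_n -> R) g a b :
  is_gradient f g -> convex_fun f -> f a + dotv (g a) (b - a) <= f b.
Proof.
move=> f_grad f_cvx; have [f_diff f_d] := f_grad a.
have f_der := cvg_dnbhs_at_right (diff_derivable (v := b - a) f_diff).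
have D_eq : 'D_(b - a) f a = dotv (g a) (b - a) by rewrite deriveE // f_d.
have : lim ((fun h : R => h^-1 *: ((f \o shift a) (h *: (b - a)) - f a)) @ 0^'+)
       <= f b - f a.
  apply: limr_le; first exact: cvgP f_der.
  near=> h.
  have h_gt0 : 0 < h by near: h; exact: nbhs_right_gt.
  have h_lt1 : h < 1 by near: h; exact: nbhs_right_lt.
  rewrite /= (addrC (h *: (b - a)) a).
  have := convex_fun_segment a b f_cvx (l := h); rewrite h_gt0 (ltW h_lt1) => /(_ isT) hseg.
  by rewrite -[_ *: _]/(h^-1 * _) ler_pdivrMl //; lra.
rewrite (cvg_lim _ f_der) //.
rewrite -[lim _]/('D_(b - a) f a) D_eq; lra.
Unshelve. all: by end_near.
Qed.

End Convexity.

Section Backtracking.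
Variables (R : realType) (tau1 tau2 : R).
Hypotheses (tau1_gt0 : 0 < tau1) (tau2_lt1 : tau2 < 1).

Lemma reduce_in01 t t' : reduce tau1 tau2 t t' -> 0 < t <= 1 -> 0 < t' <= 1.
Proof.
case/andP=> lo hi /andP[t_gt0 t_le1]; apply/andP; split.
  by apply: lt_le_trans lo; rewrite mulr_gt0.
have := ler_wpM2r (ltW t_gt0) (ltW tau2_lt1); rewrite mul1r; lra.
Qed.

Lemma bt_until_in01 P t s : bt_until tau1 tau2 P t s -> 0 < t <= 1 -> 0 < s <= 1.
Proof. by elim=> // {}t t' {}s _ /reduce_in01 red _ IH /red. Qed.

Lemma linesearch_in01 n m (G : 'I_m -> 'rV[R]_n -> R) gradG H gamma x d js tk :
  linesearch G gradG H gamma tau1 tau2 x d js tk -> 0 < tk <= 1.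
Proof.
have unit_in01 : 0 < (1 : R) <= 1 by rewrite ltr01 lexx.
case=> t2 [/bt_until_in01/(_ unit_in01) t2_in01 [[_ ->] //|[_ [t3 [red bt3]]]]].
exact: bt_until_in01 bt3 (reduce_in01 red t2_in01).
Qed.

End Backtracking.

Section ProximalPoint.
Variables (R : realType) (n m : nat) (gradG : 'I_m -> 'rV[R]_n -> 'rV[R]_n)
  (H : 'I_m -> 'rV[R]_n -> \bar R).
Hypothesis H_proper : forall i z, H i z != -oo%E.
Hypothesis H_convex : forall i, convex_efun (H i).

Definition fin_at (z : 'rV[R]_n) : Prop := forall i, H i z \is a fin_num.

Definition psi_term (i : 'I_m) (x u : 'rV[R]_n) : R :=
  dotv (gradG i x) (u - x) + fine (H i u) - fine (H i x).

Lemma fin_at_segment a b l :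
  fin_at a -> fin_at b -> 0 < l <= 1 -> fin_at (a + l *: (b - a)).
Proof.
by move=> Ha Hb l01 i; have [] := convex_efun_segment (H_proper i) (H_convex i) (Ha i) (Hb i) l01.
Qed.

Lemma psi_term_segment i x a b l : fin_at x -> fin_at a -> fin_at b -> 0 < l <= 1 ->
  psi_term i x (a + l *: (b - a))
  <= psi_term i x a + l * (psi_term i x b - psi_term i x a).
Proof.
move=> Hx Ha Hb l01.
have [_ H_seg] := convex_efun_segment (H_proper i) (H_convex i) (Ha i) (Hb i) l01.
have dir : dotv (gradG i x) (b - a) = dotv (gradG i x) (b - x) - dotv (gradG i x) (a - x).
  by rewrite -dotvBr opprB addrA subrK.
have shift : a + l *: (b - a) - x = (a - x) + l *: (b - a) by rewrite addrAC.
by rewrite /psi_term shift dotvDr dotvZr dir; lra.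
Qed.

(* [i0] only witnesses that 'I_m is nonempty: for m = 0, psi is -oo. *)
Lemma psi_max (i0 : 'I_m) x u : fin_at x -> fin_at u ->
  exists2 i, psi gradG H x u = (psi_term i x u)%:E &
             forall l, psi_term l x u <= psi_term i x u.
Proof.
move=> Hx Hu.
have -> : psi gradG H x u = (\big[maxe/-oo]_(i < m) (psi_term i x u)%:E)%E.
  by rewrite /psi; apply: eq_bigr => i _; rewrite /psi_term EFinB EFinD !fineK.
set F := fun i => (psi_term i x u)%:E.
have F_max : (\big[maxe/-oo]_(i < m) F i = F [arg max_(i > i0) F i]%O)%E.
  by apply: bigmax_eq_arg => // i _; rewrite leNye.
exists [arg max_(i > i0) F i]%O => // l.
by rewrite -lee_fin -[X in (_ <= X)%E]/(F _) -F_max; exact: le_bigmax.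
Qed.

Lemma psi_self (i0 : 'I_m) x : fin_at x -> psi gradG H x x = 0%E.
Proof.
by move=> Hx; have [i -> _] := psi_max i0 Hx Hx; rewrite /psi_term subrr dotv0r add0r subrr.
Qed.

Variable alpha : R.
Hypothesis alpha_gt0 : 0 < alpha.

Lemma prox_fin_at x p : fin_at x -> is_prox gradG H alpha x p -> fin_at p.
Proof.
move=> Hx p_prox i; apply: contraT => Hp_fin.
have Hp : H i p = +oo%E by move: Hp_fin (H_proper i p); case: (H i p).
have psi_p : psi gradG H x p = +oo%E.
  apply/eqP; rewrite eq_le leey /=; apply: le_trans (le_bigmax _ _ i).
  by rewrite Hp -(fineK (Hx i)).
by have := p_prox x; rewrite /prox_obj psi_p (psi_self i Hx).
Qed.

Lemma prox_three_point (i0 : 'I_m) x p u :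
  fin_at x -> fin_at u -> is_prox gradG H alpha x p ->
  (psi gradG H x p <= psi gradG H x u + (dotv (p - x) (u - p) / alpha)%:E)%E.
Proof.
move=> Hx Hu p_prox; have Hp := prox_fin_at Hx p_prox.
have [ip Ep Mp] := psi_max i0 Hx Hp; have [iu Eu Mu] := psi_max i0 Hx Hu.
rewrite Ep Eu -EFinD lee_fin.
set Pp := psi_term ip x p; set Pu := psi_term iu x u.
set k := (2 * alpha)^-1.
have k_gt0 : 0 < k by rewrite invr_gt0 mulr_gt0.
have alphaV : alpha^-1 = 2 * k by rewrite /k invfM mulrA divff ?mul1r.
rewrite alphaV.
apply: (@ler_of_forall_small_ler_addM _ _ _ (k * sqnorm (u - p))).
  by rewrite mulr_ge0 ?sqnorm_ge0 // ltW.
move=> s /andP[s_gt0 s_lt1]; have s01 : 0 < s <= 1 by rewrite s_gt0 ltW.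
set us := p + s *: (u - p).
have [i Es _] := psi_max i0 Hx (fin_at_segment Hp Hu s01).
have p_min : Pp + sqnorm (p - x) * k <= psi_term i x us + sqnorm (us - x) * k.
  by have := p_prox us; rewrite /prox_obj Es Ep -!EFinD lee_fin.
have seg := psi_term_segment i Hx Hp Hu s01; rewrite -/us in seg.
have dist : sqnorm (us - x)
            = sqnorm (p - x) + 2 * (s * dotv (p - x) (u - p)) + s ^+ 2 * sqnorm (u - p).
  by rewrite /us (addrAC p) (sqnormD (p - x)) sqnormZ dotvZr.
have u_le : s * psi_term i x u <= s * Pu by rewrite ler_wpM2l ?Mu // ltW.
have p_le : (1 - s) * psi_term i x p <= (1 - s) * Pp by rewrite ler_wpM2l ?Mp // subr_ge0 ltW.
by rewrite -(ler_pM2l s_gt0); rewrite dist in p_min; lra.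
Qed.

Lemma psi_prox_le (i0 : 'I_m) x p : fin_at x -> is_prox gradG H alpha x p ->
  (psi gradG H x p <= (- (sqnorm (p - x) / alpha))%:E)%E.
Proof.
move=> Hx p_prox; have := prox_three_point i0 Hx Hx p_prox.
by rewrite (psi_self i0 Hx) add0e -(opprB p x) dotvNr mulNr.
Qed.

Variable G : 'I_m -> 'rV[R]_n -> R.

Lemma domF_fin_at z : domF G H z -> fin_at z.
Proof. by move=> Hz i; move: (Hz i) (H_proper i z); rewrite /Fobj; case: (H i z). Qed.

Lemma FobjE i z : fin_at z -> Fobj G H i z = (G i z + fine (H i z))%:E.
Proof. by move=> Hz; rewrite /Fobj EFinD fineK. Qed.

Hypothesis G_grad : forall i, is_gradient (G i) (gradG i).
Hypothesis G_convex : forall i, convex_fun (G i).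

Lemma psi_le_bigmax_Fobj x y : fin_at x -> fin_at y ->
  (psi gradG H x y <= \big[maxe/-oo]_(i < m) (Fobj G H i y - Fobj G H i x))%E.
Proof.
move=> Hx Hy; apply: le_bigmax2 => i _.
rewrite !FobjE // -(fineK (Hx i)) -(fineK (Hy i)) /= -!EFinD lee_fin.
by have := convex_gradient_le x y (G_grad i) (G_convex i); lra.
Qed.

Section OneStep.
Variables (gamma t : R) (j : 'I_m) (x p : 'rV[R]_n).
Hypotheses (Hx : fin_at x) (p_prox : is_prox gradG H alpha x p) (t_in01 : 0 < t <= 1).
Hypothesis armijo_j : armijo G gradG gamma x (p - x) j t.

Lemma Fobj_step_le :
  (Fobj G H j (x + t *: (p - x)) - Fobj G H j x
   <= t%:E * (psi gradG H x p + (gamma / 2 * sqnorm (p - x))%:E))%E.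
Proof.
have Hp := prox_fin_at Hx p_prox; have [t_gt0 _] := andP t_in01.
have Hx1 := fin_at_segment Hx Hp t_in01.
have [_ H_seg] := convex_efun_segment (H_proper j) (H_convex j) (Hx j) (Hp j) t_in01.
have [i Ep Mp] := psi_max j Hx Hp.
rewrite !FobjE // Ep -EFinB -EFinD -EFinM lee_fin.
have := ler_wpM2l (ltW t_gt0) (Mp j); move: armijo_j; rewrite /armijo /psi_term; lra.
Qed.

Lemma step_psi_lower :
  ((t^-1)%:E * (Fobj G H j (x + t *: (p - x)) - Fobj G H j x)
     - (gamma / 2 * sqnorm (p - x))%:E <= psi gradG H x p)%E.
Proof.
have Hp := prox_fin_at Hx p_prox; have [t_gt0 _] := andP t_in01.
have Hx1 := fin_at_segment Hx Hp t_in01.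
have [i Ep _] := psi_max j Hx Hp.
have := Fobj_step_le; rewrite !FobjE // Ep.
rewrite -EFinB -EFinD -EFinM -EFinM -EFinB !lee_fin -ler_pdivrMl //; lra.
Qed.

Lemma step_Fobj_descent :
  (Fobj G H j (x + t *: (p - x)) - Fobj G H j x
   <= (- (t * (alpha^-1 - gamma / 2) * sqnorm (p - x)))%:E)%E.
Proof.
have Hp := prox_fin_at Hx p_prox; have [t_gt0 _] := andP t_in01.
have Hx1 := fin_at_segment Hx Hp t_in01.
have [i Ep _] := psi_max j Hx Hp.
have := Fobj_step_le; have := psi_prox_le j Hx p_prox.
rewrite !FobjE // Ep -EFinB -EFinD -EFinM !lee_fin.
move=> /(ler_wpM2l (ltW t_gt0)); lra.
Qed.

Lemma step_dist_le y : domF G H y ->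
  ((sqnorm (x + t *: (p - x) - y))%:E
   <= (sqnorm (x - y))%:E
      + (2 * alpha)%:E * (Fobj G H j x - Fobj G H j (x + t *: (p - x)))
      + (2 * alpha * t)%:E
          * \big[maxe/-oo]_(i < m) (Fobj G H i y - Fobj G H i x)
      - (2 * alpha * t * (alpha^-1 - gamma / 2) * sqnorm (p - x))%:E
      + (t ^+ 2 * sqnorm (p - x))%:E)%E.
Proof.
move=> /domF_fin_at Hy; have Hp := prox_fin_at Hx p_prox; have [t_gt0 _] := andP t_in01.
have Hx1 := fin_at_segment Hx Hp t_in01.
have [i Ep _] := psi_max j Hx Hp; have [iy Ey _] := psi_max j Hx Hy.
have psi_y_le := psi_le_bigmax_Fobj Hx Hy; rewrite Ey in psi_y_le.
set Pp := psi_term i x p in Ep; set Py := psi_term iy x y in Ey psi_y_le.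
have step := Fobj_step_le; rewrite !FobjE // Ep -EFinB -EFinD -EFinM lee_fin in step.
have three := prox_three_point j Hx Hy p_prox.
rewrite Ep Ey -EFinD lee_fin -lerBlDl ler_pdivlMr // in three.
set S := sqnorm (p - x) in step *; set Dy := dotv (p - x) (y - p) in three *.
rewrite !FobjE // -EFinB -EFinM.
set F0 := G j x + fine (H j x) in step *.
set F1 := G j (x + t *: (p - x)) + fine (H j (x + t *: (p - x))) in step *.
have dist : sqnorm (x + t *: (p - x) - y) = sqnorm (x - y) - 2 * t * (Dy + S) + t ^+ 2 * S.
  have cross : dotv (x - y) (p - x) = - (Dy + S).
    by rewrite /S /sqnorm -dotvDr addrA subrK dotvC -dotvNr opprB.
  by rewrite (addrAC x) (sqnormD (x - y)) sqnormZ dotvZr cross -/S; ring.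
have coef : 2 * alpha * t * (alpha^-1 - gamma / 2) * S = 2 * t * S - alpha * t * gamma * S.
  by field; rewrite gt_eqF.
apply: (@le_trans _ _ ((sqnorm (x - y) + 2 * alpha * (F0 - F1) + 2 * alpha * t * Py
    - 2 * alpha * t * (alpha^-1 - gamma / 2) * S + t ^+ 2 * S)%:E)).
  rewrite lee_fin dist coef.
  have := ler_wpM2l (ltW t_gt0) three; have := ler_wpM2l (ltW alpha_gt0) step; lra.
rewrite EFinD EFinB (EFinD _ (_ * Py)) EFinD.
apply: leeD2r; apply: leeB (lexx _); apply: leeD2l.
by rewrite EFinM lee_wpmul2l // lee_fin !mulr_ge0 // ltW.
Qed.

End OneStep.

End ProximalPoint.

Section MPGRun.
Variables (R : realType) (n m : nat) (G : 'I_m -> 'rV[R]_n -> R)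
  (gradG : 'I_m -> 'rV[R]_n -> 'rV[R]_n) (H : 'I_m -> 'rV[R]_n -> \bar R)
  (alpha gamma tau1 tau2 : R) (x p : nat -> 'rV[R]_n) (t : nat -> R).
Hypotheses (tau1_gt0 : 0 < tau1) (tau2_lt1 : tau2 < 1).
Hypothesis run : MPG_run G gradG H alpha gamma tau1 tau2 x p t.

Lemma MPG_run_step k :
  (forall i, (i <= k)%N -> theta gradG H alpha (x i) (p i) != 0%E) ->
  [/\ is_prox gradG H alpha (x k) (p k), 0 < t k <= 1
    & x k.+1 = x k + t k *: (p k - x k)].
Proof.
move=> running; have [_ run_k] := run.
have [p_prox /(_ (running k (leqnn k)))] := run_k k (fun i lt_ik => running i (ltnW lt_ik)).
by case=> js [_ [/(linesearch_in01 tau1_gt0 tau2_lt1) t_in01 ->]].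
Qed.

Hypothesis H_proper : forall i z, H i z != -oo%E.
Hypothesis H_convex : forall i, convex_efun (H i).

Lemma MPG_run_fin_at k :
  (forall i, (i <= k)%N -> theta gradG H alpha (x i) (p i) != 0%E) ->
  forall i, (i <= k.+1)%N -> fin_at H (x i).
Proof.
move=> running; elim=> [_|i IH le_ik]; first exact: (domF_fin_at H_proper (proj1 run)).
have [p_prox t_in01 ->] := @MPG_run_step i (fun l le_li => running l (leq_trans le_li le_ik)).
have Hxi := IH (ltnW le_ik).
exact: (fin_at_segment H_proper H_convex Hxi (prox_fin_at H_proper Hxi p_prox) t_in01).
Qed.

End MPGRun.

Unset Implicit Arguments. Set Strict Implicit.

Theorem mainTheorem2 (R : realType) (n m : nat)
    (G : 'I_m -> 'rV[R]_n -> R) (gradG : 'I_m -> 'rV[R]_n -> 'rV[R]_n)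
    (H : 'I_m -> 'rV[R]_n -> \bar R)
    (alpha gamma tau1 tau2 : R)
    (x p : nat -> 'rV[R]_n) (t : nat -> R) (k : nat) (j : 'I_m) :
  standing_assumptions G gradG H ->
  0 < alpha -> 0 < gamma < 2 / alpha -> 0 < tau1 -> tau1 < tau2 -> tau2 < 1 ->
  MPG_run G gradG H alpha gamma tau1 tau2 x p t ->
  (forall i : nat, (i <= k)%N -> theta gradG H alpha (x i) (p i) != 0%E) ->
  G j (x k.+1) <= G j (x k) + t k * dotv (gradG j (x k)) (p k - x k)
                  + t k * (gamma / 2) * sqnorm (p k - x k) ->
  (* (i) *)
  ((t k)^-1%:E * (Fobj G H j (x k.+1) - Fobj G H j (x k))
     - (gamma / 2 * sqnorm (p k - x k))%:E
   <= psi gradG H (x k) (p k))%E /\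
  (* (ii) *)
  (forall y : 'rV[R]_n, domF G H y ->
    ((sqnorm (x k.+1 - y))%:E
     <= (sqnorm (x k - y))%:E
        + (2 * alpha)%:E * (Fobj G H j (x k) - Fobj G H j (x k.+1))
        + (2 * alpha * t k)%:E
            * \big[maxe/-oo]_(i < m) (Fobj G H i y - Fobj G H i (x k))
        - (2 * alpha * t k * (alpha^-1 - gamma / 2) * sqnorm (p k - x k))%:E
        + (t k ^+ 2 * sqnorm (p k - x k))%:E)%E) /\
  (* (iii) *)
  (Fobj G H j (x k.+1) - Fobj G H j (x k)
   <= (- (t k * (alpha^-1 - gamma / 2) * sqnorm (p k - x k)))%:E)%E.
Proof.
move=> [G_hyp [H_hyp _]] alpha_gt0 _ tau1_gt0 _ tau2_lt1 run running armijo_j.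
have H_proper i z : H i z != -oo%E := (H_hyp i).1.1 z.
have H_convex i : convex_efun (H i) := (H_hyp i).2.1.
have G_grad i : is_gradient (G i) (gradG i) := (G_hyp i).1.
have G_convex i : convex_fun (G i) := (G_hyp i).2.2.
have [p_prox t_in01 x_next] := MPG_run_step tau1_gt0 tau2_lt1 run running.
have Hx := MPG_run_fin_at tau1_gt0 tau2_lt1 run H_proper H_convex running (leqnSn k).
have armijo_k : armijo G gradG gamma (x k) (p k - x k) j (t k) by rewrite /armijo -x_next.
rewrite x_next.
split; [|split].
- exact: (step_psi_lower H_proper H_convex Hx p_prox t_in01 armijo_k).
- exact: (step_dist_le H_proper H_convex alpha_gt0 G_grad G_convex Hx p_prox t_in01 armijo_k).
- exact: (step_Fobj_descent H_proper H_convex alpha_gt0 Hx p_prox t_in01 armijo_k).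
Qed.
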